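(* Under Total Store Order, for all integers $\mu\ge 1$ and $q\ge 0$, $$\Pr[F_\mu \mid \Phi_\mu \text{ exists and } \Psi_\mu=q]\;\ge\;\frac{2^{-(q-1)}-2^{-\mu q}}{\binom{\mu+q-1}{q}}.$$
   Context: Fix $m\ge 1$. A random program is a sequence $x_1,\dots,x_{m+2}$ of memory operations, each with a type in $\{\mathrm{LD},\mathrm{ST}\}$: $x_1,\dots,x_m$ have i.i.d. types, each $\mathrm{ST}$ with probability $1/2$ and $\mathrm{LD}$ with probability $1/2$; $x_{m+1}$ (the critical load) has type $\mathrm{LD}$ and $x_{m+2}$ (the critical store) has type $\mathrm{ST}$. The initial order is $S_0=(x_1,\dots,x_{m+2})$. A memory model is specified by the set of ordered type pairs $(\tau_1,\tau_2)$ for which an instruction of type $\tau_2$ may be moved ahead of an immediately preceding instruction of type $\tau_1$: Sequential Consistency (SC) allows no pair; Total Store Order (TSO) allows only the pair $(\mathrm{ST},\mathrm{LD})$ (a load may move ahead of a preceding store); Weak Ordering (WO) allows all four pairs. The settling process runs rounds $r=1,\dots,m+2$. Before round $r$, the current order $S_{r-1}$ consists of $x_1,\dots,x_{r-1}$ in some order in positions $1,\dots,r-1$, followed by $x_r,\dots,x_{m+2}$ in positions $r,\dots,m+2$. In round $r$, instruction $x_r$ (starting at position $r$) repeatedly attempts to swap with the instruction immediately preceding it in the current order: the attempt fails automatically if the pair (type of the preceding instruction, type of $x_r$) is not allowed by the memory model, or if $x_r$ is the critical store and the preceding instruction is the critical load; otherwise the attempt succeeds independently with probability $1/2$. The round ends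 when an attempt fails or $x_r$ reaches position $1$; the resulting order is $S_r$. For $\mu\ge1$, $\Phi_\mu$ is the largest index $i\le m$ such that $x_i$ has type $\mathrm{ST}$ and exactly $\mu$ of $x_i,\dots,x_m$ have type $\mathrm{ST}$ (i.e. the initial position of the $\mu$-th non-critical store counting upward from the critical load), if it exists; $\Psi_\mu=m+1-\mu-\Phi_\mu$ is the number of loads among $x_{\Phi_\mu+1},\dots,x_m$. $F_\mu$ is the event that in the order $S_m$ the instructions at positions $m-\mu+1,\dots,m$ all have type $\mathrm{ST}$. *)

From HB Require Import structures.
From mathcomp Require Import all_boot all_order all_algebra.
Set Implicit Arguments. Unset Strict Implicit. Unset Printing Implicit Defensive.
Import Order.TTheory GRing.Theory Num.Theory.

Inductive optype := LD | ST.
Definition isST (o : optype) : bool := if o is ST then true else false.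

(* A memory model: allowed o1 o2 = an instruction of type o2 may move ahead
   of an immediately preceding instruction of type o1. *)
Definition memmodel := optype -> optype -> bool.
Definition SC : memmodel := fun _ _ => false.
Definition TSO : memmodel := fun o1 o2 =>
  match o1, o2 with ST, LD => true | _, _ => false end.
Definition WO : memmodel := fun _ _ => true.

(* Instructions are labelled 1 .. m+2 (x_1 .. x_{m+2}).
   Sample space: the types of x_1..x_m (true = ST) and an ample supply of
   independent fair coins: coin (r, k) decides the k-th (0-based) attempt
   of round r. The uniform distribution on this finite space models the
   random program together with the independent 1/2-successes. *)
Definition Omega (m : nat) : finType :=
  ({ffun 'I_m -> bool} * {ffun 'I_(m + 2) -> {ffun 'I_(m + 2) -> bool}})%type.

Definition ty (m : nat) (t : {ffun 'I_m -> bool}) (i : nat) : optype :=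
  if i == m.+1 then LD else if i == m.+2 then ST else
  if (insub i.-1 : option 'I_m) is Some j then (if t j then ST else LD) else LD.

Definition coin (m : nat) (c : {ffun 'I_(m + 2) -> {ffun 'I_(m + 2) -> bool}})
  (r k : nat) : bool :=
  if (insub r.-1 : option 'I_(m + 2)) is Some i then
    (if (insub k : option 'I_(m + 2)) is Some j then c i j else false)
  else false.

(* Instruction x currently at 0-based position p of order s; k = attempt number.
   An attempt succeeds iff the pair is allowed, it is not (critical store
   behind critical load), and the coin for this attempt says success. *)
Fixpoint climb (M : memmodel) (ty : nat -> optype) (cl cs : nat)
  (cn : nat -> bool) (x p k : nat) (s : seq nat) {struct p} : seq nat :=
  match p with
  | 0 => s
  | p'.+1 =>
    let y := nth 0 s p' in
    if [&& M (ty y) (ty x), ~~ ((x == cs) && (y == cl)) & cn k]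
    then climb M ty cl cs cn x p' k.+1 (set_nth 0 (set_nth 0 s p' x) p y)
    else s
  end.

(* Round r: x_r starts at (1-based) position r, i.e. 0-based position r-1. *)
Definition round (M : memmodel) (ty : nat -> optype) (cl cs : nat)
  (cn : nat -> nat -> bool) (r : nat) (s : seq nat) : seq nat :=
  climb M ty cl cs (cn r) r r.-1 0 s.

Definition settle (M : memmodel) (m : nat) (w : Omega m) (n : nat) : seq nat :=
  foldl (fun s r => round M (ty w.1) m.+1 m.+2 (coin w.2) r s)
        (iota 1 (m + 2)) (iota 1 n).

Definition isPhi (m : nat) (t : {ffun 'I_m -> bool}) (mu i : nat) : bool :=
  [&& 1 <= i <= m, isST (ty t i)
    & count (fun j => isST (ty t j)) (iota i (m - i + 1)) == mu].

Definition Phi_exists (m : nat) (t : {ffun 'I_m -> bool}) (mu : nat) : bool :=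
  has (isPhi t mu) (iota 1 m).

Definition Phi (m : nat) (t : {ffun 'I_m -> bool}) (mu : nat) : nat :=
  \max_(i <- iota 1 m | isPhi t mu i) i.

Definition Psi (m : nat) (t : {ffun 'I_m -> bool}) (mu : nat) : int :=
  (Posz m.+1 - Posz mu - Posz (Phi t mu))%R.

Definition Cond (m mu q : nat) (w : Omega m) : bool :=
  Phi_exists w.1 mu && (Psi w.1 mu == Posz q).

(* F_mu: in S_m, positions m-mu+1 .. m (1-based) all hold stores *)
Definition Fev (M : memmodel) (m mu : nat) (w : Omega m) : bool :=
  all (fun p => isST (ty w.1 (nth 0 (settle M w m) p))) (iota (m - mu) mu).

Definition prob_cond (T : finType) (A B : pred T) : rat :=
  (#|[set w | A w && B w]|%:R / #|[set w | B w]|%:R)%R.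

(* Conditioned on the event, a := m - mu - q is fixed and x_(a+1) .. x_m consist
   of mu stores, x_(a+1) being one of them, and q loads.  Under TSO a store
   never moves while a load may climb over a store.  Call the coins good when
   every load x_r (a+1 < r <= m) wins the first s flips of its round, s being
   the number of stores among x_(a+1) .. x_(r-1).  By induction on the rounds,
   good coins keep all these stores in a block on top of the settled prefix, so
   F_mu holds.  Hence the conditional probability is at least the conditional
   mean of 2^-(number of prescribed flips).  Given the event, the store bits of
   x_(a+2) .. x_m are uniform over the strings of length L = mu - 1 + q with
   mu - 1 ones, and the number of prescribed flips is their waiting weight, so
   the mean is wait_sum (mu - 1) L / C(L, mu - 1).  A Pascal-type recurrence
   gives wait_sum k (k + q) >= 2^(1-q) - 2^(-(k+1) q), which is the claim. *)

From HB Require Import structures.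
From mathcomp Require Import all_boot all_order all_algebra.
From mathcomp Require Import zify ring lra.
From Stdlib Require Import FunctionalExtensionality.
Import Order.TTheory GRing.Theory Num.Theory.
Set Implicit Arguments. Unset Strict Implicit. Unset Printing Implicit Defensive.

Section Climb.
Variables (M : memmodel) (tyf : nat -> optype) (cl cs : nat) (cn : nat -> bool) (x : nat).

Lemma size_climb p k s : p < size s -> size (climb M tyf cl cs cn x p k s) = size s.
Proof.
elim: p k s => [//|p IH] k s /= Hp.
case: ifP => // _; rewrite IH; rewrite !size_set_nth; lia.
Qed.

Lemma nth_climb_above p k s j : p < size s -> p < j ->
  nth 0 (climb M tyf cl cs cn x p k s) j = nth 0 s j.
Proof.
elim: p k s => [//|p IH] k s /= Hp Hj.
case: ifP => // _; rewrite IH ?size_set_nth; try lia.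
rewrite !nth_set_nth /= (_ : j == p.+1 = false); last by apply/eqP; lia.
by rewrite nth_set_nth /= (_ : j == p = false) //; apply/eqP; lia.
Qed.

Lemma climb_over (Q : pred nat) n p k s : n <= p -> p < size s -> nth 0 s p = x ->
  (forall i, i < n -> let y := nth 0 s (p - i.+1) in
     [&& M (tyf y) (tyf x), ~~ ((x == cs) && (y == cl)), cn (k + i) & Q y]) ->
  forall j, p - n < j <= p -> Q (nth 0 (climb M tyf cl cs cn x p k s) j).
Proof.
elim: n p k s => [|n IH] p k s Hnp Hps Hx Hi j Hj; first by lia.
case: p Hnp Hps Hx Hi Hj => [|p] Hnp Hps Hx Hi Hj; first by lia.
have := Hi 0 isT; rewrite /= subSS subn0 addn0 => /and4P [H1 H2 H3 H4].
rewrite /= H1 H2 H3 /=.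
set s' := set_nth 0 (set_nth 0 s p x) p.+1 (nth 0 s p).
have Hs' : size s' = size s by rewrite /s' !size_set_nth; lia.
have [->|Hjp] := eqVneq j p.+1.
  by rewrite nth_climb_above ?Hs'; [rewrite /s' nth_set_nth /= eqxx|lia..].
apply: IH; try lia.
- rewrite /s' nth_set_nth /= (_ : p == p.+1 = false); last by apply/eqP; lia.
  by rewrite nth_set_nth /= eqxx.
- move=> i Hin /=; have := Hi i.+1 Hin.
  rewrite /= subSS addnS /s' !nth_set_nth /=.
  rewrite (_ : p - i.+1 == p.+1 = false); last by apply/eqP; lia.
  by rewrite nth_set_nth /= (_ : p - i.+1 == p = false) //; apply/eqP; lia.
Qed.

End Climb.

Lemma climb_TSO_store tyf cl cs cn x p k s : tyf x = ST ->
  climb TSO tyf cl cs cn x p k s = s.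
Proof. by case: p => //= p ->; case: (tyf _). Qed.

Lemma settle_succ M m (w : Omega m) n :
  settle M w n.+1 = round M (ty w.1) m.+1 m.+2 (coin w.2) n.+1 (settle M w n).
Proof.
have E : iota 1 n.+1 = iota 1 n ++ [:: n.+1].
  by rewrite -(addn1 n) iotaD add1n addn1.
by rewrite /settle E foldl_cat.
Qed.

Lemma settle_shape M m (w : Omega m) r : r <= m + 2 ->
  size (settle M w r) = m + 2 /\
  forall j, r <= j < m + 2 -> nth 0 (settle M w r) j = j.+1.
Proof.
elim: r => [|r IH] Hr.
  by rewrite /settle /= size_iota; split => // j Hj; rewrite nth_iota; lia.
have [Hs Hn] := IH (ltnW Hr).
rewrite settle_succ /round /=; split; first by rewrite size_climb // Hs; lia.
by move=> j Hj; rewrite nth_climb_above ?Hs; [apply: Hn|..]; lia.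
Qed.

(* 0-based store indicator of the random part of a program: storebit t j holds
   iff x_(j+1) is a store; it is false outside 0 .. m-1. *)
Definition storebit m (t : {ffun 'I_m -> bool}) (j : nat) : bool :=
  if (insub j : option 'I_m) is Some i then t i else false.

Lemma ty_storebit m (t : {ffun 'I_m -> bool}) i : 0 < i <= m ->
  ty t i = if storebit t i.-1 then ST else LD.
Proof.
move=> Hi; rewrite /ty (_ : i == m.+1 = false); last by apply/eqP; lia.
rewrite (_ : i == m.+2 = false); last by apply/eqP; lia.
by rewrite /storebit; case: (insub _).
Qed.

Lemma isST_if (b : bool) : isST (if b then ST else LD) = b.
Proof. by case: b. Qed.

(* If positions r-k .. r-1 of S_r hold stores, then in S_(r+1) the top
   k + [x_(r+1) is a store] positions hold stores, provided a load x_(r+1)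
   wins its first k coin flips: a store stays where it is, a load climbs over
   the whole block (a load may pass a store, and it is not the critical store). *)
Lemma round_store_block m (w : Omega m) r k : r < m -> k <= r ->
  (~~ storebit w.1 r -> forall i, i < k -> coin w.2 r.+1 i) ->
  (forall j, r - k <= j < r -> isST (ty w.1 (nth 0 (settle TSO w r) j))) ->
  forall j, r.+1 - (k + storebit w.1 r) <= j < r.+1 ->
    isST (ty w.1 (nth 0 (settle TSO w r.+1) j)).
Proof.
move=> Hrm Hkr Hcoins Hblock j Hj.
have [Hs Hn] := @settle_shape TSO m w r ltac:(lia).
have Hxr : nth 0 (settle TSO w r) r = r.+1 by apply: Hn; lia.
have Hty : ty w.1 r.+1 = if storebit w.1 r then ST else LD by rewrite ty_storebit.
rewrite settle_succ /round /=.
case Hst: (storebit w.1 r) in Hcoins Hty Hj.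
- rewrite climb_TSO_store ?Hty //.
  have [->|Hjr] := eqVneq j r; first by rewrite Hxr Hty.
  by apply: Hblock; move: Hj; rewrite addn1; lia.
- rewrite addn0 in Hj.
  apply: (climb_over (Q := fun y => isST (ty w.1 y)) (n := k)) => //;
    [by rewrite Hs; lia | | by lia].
  move=> i Hi /=.
  have Hy : isST (ty w.1 (nth 0 (settle TSO w r) (r - i.+1))) by apply: Hblock; lia.
  rewrite Hy Hty andbT (_ : r.+1 == m.+2 = false) /=; last by apply/eqP; lia.
  by move: Hy; case: (ty _ _) => //= _; apply: Hcoins.
Qed.

(* Number of stores among x_(a+1) .. x_r. *)
Definition nstores m (t : {ffun 'I_m -> bool}) (a r : nat) : nat :=
  count (storebit t) (iota a (r - a)).

Lemma nstores_le m (t : {ffun 'I_m -> bool}) a r : nstores t a r <= r - a.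
Proof. by rewrite /nstores (leq_trans (count_size _ _)) // size_iota. Qed.

Lemma nstoresS m (t : {ffun 'I_m -> bool}) a r : a <= r ->
  nstores t a r.+1 = nstores t a r + storebit t r.
Proof.
by move=> Har; rewrite /nstores subSn // -addn1 iotaD count_cat /= addn0 subnKC.
Qed.

Section StoreBlock.
Variables (m : nat) (w : Omega m) (a : nat).

(* Good coins: every load x_r with a+1 < r <= m wins the first nstores (r-1)
   flips of its round, i.e. enough of them to climb over all stores issued
   since x_(a+1). *)
Hypothesis good_coins : forall r, a.+1 < r <= m -> ~~ storebit w.1 r.-1 ->
  forall i, i < nstores w.1 a r.-1 -> coin w.2 r i.

Lemma settle_store_block r : r <= m -> a <= r ->
  forall j, r - nstores w.1 a r <= j < r -> isST (ty w.1 (nth 0 (settle TSO w r) j)).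
Proof.
elim: r => [|r IH] Hrm Har j Hj; first lia.
have [Ha|Ha] := eqVneq a r.+1.
  by move: Hj; rewrite /nstores -Ha subnn /= subn0; lia.
move: j Hj; rewrite nstoresS; last lia.
have Hk := nstores_le w.1 a r.
apply: round_store_block; [lia | lia | | apply: IH; lia].
by move=> Hld i Hi; apply: good_coins => //; lia.
Qed.

End StoreBlock.

Lemma Fev_of_good_coins m (w : Omega m) mu a : mu <= m -> a <= m ->
  nstores w.1 a m = mu ->
  (forall r, a.+1 < r <= m -> ~~ storebit w.1 r.-1 ->
     forall i, i < nstores w.1 a r.-1 -> coin w.2 r i) ->
  Fev TSO mu w.
Proof.
move=> Hmu Ha Hk Hgood; apply/allP => p; rewrite mem_iota => Hp.
by apply: (settle_store_block Hgood) => //; rewrite Hk; lia.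
Qed.

Lemma count_ty m (t : {ffun 'I_m -> bool}) b n : b + n <= m ->
  count (fun j => isST (ty t j)) (iota b.+1 n) = count (storebit t) (iota b n).
Proof.
move=> Hbn; rewrite -[b.+1]add1n iotaDl count_map.
apply: eq_in_count => j; rewrite mem_iota /= => Hj.
by rewrite add1n ty_storebit ?isST_if //; lia.
Qed.

Lemma isPhiS m (t : {ffun 'I_m -> bool}) mu b :
  isPhi t mu b.+1 = [&& b < m, storebit t b & count (storebit t) (iota b (m - b)) == mu].
Proof.
rewrite /isPhi; case: (ltnP b m) => Hb //=.
rewrite ty_storebit // isST_if (_ : m - b.+1 + 1 = m - b); last lia.
by rewrite count_ty //; lia.
Qed.

(* Counting stores from a candidate to the end strictly decreases from one
   candidate to the next, so there is at most one candidate. *)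
Lemma isPhi_unique m (t : {ffun 'I_m -> bool}) mu i j :
  isPhi t mu i -> isPhi t mu j -> i = j.
Proof.
wlog Hij : i j / i <= j => [Hwlog Hi Hj|].
  by case: (leqP i j) => H; [|symmetry]; apply: Hwlog => //; lia.
case: i Hij => [|i] Hij; first by rewrite /isPhi.
case: j Hij => [|j] Hij; first by rewrite /isPhi.
rewrite !isPhiS => /and3P [Him Hsti /eqP Hci] /and3P [Hjm _ /eqP Hcj].
apply/eqP; rewrite eqSS eqn_leq (_ : i <= j) /= 1?leqNgt; last lia.
apply/negP => Hlt.
move: Hci; rewrite (_ : m - i = (j - i) + (m - j)); last lia.
rewrite iotaD subnKC; last lia.
rewrite count_cat Hcj (_ : j - i = (j - i).-1.+1) /=; last lia.
by rewrite Hsti; lia.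
Qed.

Lemma bigmax_has (s : seq nat) (P : pred nat) : has P s -> P (\max_(i <- s | P i) i).
Proof.
elim: s => [//|x s IH] /=; rewrite big_cons.
case Px: (P x) => /= H; last exact: IH.
case Hs: (has P s); first by have := IH Hs; case: (leqP x (\max_(i <- s | P i) i)).
by rewrite big_hasC ?Hs // maxn0.
Qed.

Lemma Phi_eq m (t : {ffun 'I_m -> bool}) mu i : isPhi t mu i -> Phi t mu = i.
Proof.
move=> Hi; have Hex : Phi_exists t mu.
  apply/hasP; exists i => //; move: Hi; rewrite mem_iota /isPhi; lia.
exact: isPhi_unique (bigmax_has Hex) Hi.
Qed.

Lemma Cond_window m mu q (w : Omega m) :
  Cond mu q w = [&& mu + q <= m, storebit w.1 (m - mu - q)
                  & count (storebit w.1) (iota (m - mu - q) (mu + q)) == mu].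
Proof.
rewrite /Cond (_ : (Psi w.1 mu == q) = (m.+1 == mu + Phi w.1 mu + q)); last first.
  by rewrite /Psi; apply/eqP/eqP => H; lia.
apply/andP/and3P.
- case=> Hex /eqP Hpsi.
  have := bigmax_has Hex; rewrite -/(Phi w.1 mu).
  case: (Phi w.1 mu) Hpsi => [|b] Hpsi; first by rewrite /isPhi.
  rewrite isPhiS => /and3P [Hb Hst Hc].
  have Eb : m - mu - q = b by lia.
  have Ew : mu + q = m - b by lia.
  by rewrite Eb Ew; split => //; lia.
- case=> Hmq Hst Hc.
  have Hb : m - mu - q < m.
    by case: (ltnP (m - mu - q) m) Hst => // H; rewrite /storebit insubN // -leqNgt.
  have Hphi : isPhi w.1 mu (m - mu - q).+1.
    by rewrite isPhiS Hb Hst (_ : m - (m - mu - q) = mu + q) //; lia.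
  split; first by apply/hasP; exists (m - mu - q).+1; rewrite // mem_iota; lia.
  by rewrite (Phi_eq Hphi); apply/eqP; lia.
Qed.

Local Open Scope ring_scope.

(* Bit strings t : 'I_n -> bool are read as bit streams storebit t (padded
   with false); bcons prepends a bit to a stream. *)
Definition bcons (b : bool) (g : nat -> bool) : nat -> bool :=
  fun j => if j is j'.+1 then g j' else b.
Arguments bcons b g j : simpl nomatch.

Lemma storebit_ord m (t : {ffun 'I_m -> bool}) (i : 'I_m) : storebit t i = t i.
Proof. by rewrite /storebit valK. Qed.

Lemma storebit_out m (t : {ffun 'I_m -> bool}) j : (m <= j)%N -> storebit t j = false.
Proof. by move=> H; rewrite /storebit insubN // -leqNgt. Qed.

Lemma sum_bits_cons L (F : (nat -> bool) -> rat) :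
  \sum_(t : {ffun 'I_L.+1 -> bool}) F (storebit t) =
  \sum_(t : {ffun 'I_L -> bool})
    (F (bcons true (storebit t)) + F (bcons false (storebit t))).
Proof.
pose h (p : bool * {ffun 'I_L -> bool}) : {ffun 'I_L.+1 -> bool} :=
  [ffun i : 'I_L.+1 => bcons p.1 (storebit p.2) i].
pose hi (t : {ffun 'I_L.+1 -> bool}) : bool * {ffun 'I_L -> bool} :=
  (t ord0, [ffun j : 'I_L => t (lift ord0 j)]).
have hK : cancel h hi.
  case=> b t'; rewrite /hi /h /=; congr pair; first by rewrite ffunE.
  by apply/ffunP => j; rewrite !ffunE /= storebit_ord.
have hiK : cancel hi h.
  move=> t; apply/ffunP => -[[|j] Hj]; rewrite ffunE /=.
    by congr (t _); apply: val_inj.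
  have Hj' : (j < L)%N := Hj.
  rewrite -[j]/(val (Ordinal Hj')) storebit_ord ffunE.
  by congr (t _); apply: val_inj.
have hE p : storebit (h p) = bcons p.1 (storebit p.2).
  apply: functional_extensionality => j; case: (ltnP j L.+1) => Hj.
    by rewrite -[j]/(val (Ordinal Hj)) storebit_ord ffunE.
  by rewrite storebit_out //; case: j Hj => [//|j] Hj /=; rewrite storebit_out.
rewrite (reindex h); last by exists hi => ? _; [apply: hK | apply: hiK].
under eq_bigr => p _ do rewrite hE.
rewrite -(pair_big xpredT xpredT (fun b t => F (bcons b (storebit t)))) /=.
by rewrite big_bool /= big_split.
Qed.

Lemma sum_bits_suffix m a n (F : (nat -> bool) -> rat) : m = (a + n)%N ->
  \sum_(t : {ffun 'I_m -> bool}) F (fun j => storebit t (a + j)) =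
  2%:R ^+ a * \sum_(t : {ffun 'I_n -> bool}) F (storebit t).
Proof.
move=> ->; elim: a => [|a IH]; first by rewrite expr0 mul1r.
rewrite (sum_bits_cons (a + n) (fun g => F (fun j => g (a.+1 + j)))).
have E b (g : nat -> bool) : (fun j => bcons b g (a.+1 + j)) = (fun j => g (a + j)).
  by apply: functional_extensionality => j; rewrite addSn.
under eq_bigr => t _ do rewrite !E.
by rewrite big_split /= IH exprS -mulrA mulr_natl mulr2n.
Qed.

Definition ones (h : nat -> bool) (L : nat) : nat := count h (iota 0 L).
Arguments ones : simpl never.

Lemma ones_bcons b h L : ones (bcons b h) L.+1 = (b + ones h L)%N.
Proof. by rewrite /ones /= -[1%N]/(1 + 0)%N iotaDl count_map. Qed.

Lemma ones_sum (h : nat -> bool) L : ones h L = (\sum_(0 <= i < L) (h i : nat))%N.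
Proof.
elim: L => [|L IH]; first by rewrite big_geq.
rewrite /ones; have -> : iota 0 L.+1 = iota 0 L ++ [:: L] by rewrite -(addn1 L) iotaD.
by rewrite count_cat -/(ones h L) IH big_nat_recr //= addn0.
Qed.

(* One half, as a rational (ssrnat already uses the name half). *)
Definition half_rat : rat := 2%:R^-1.

Lemma half_ge0 : 0 <= half_rat. Proof. by rewrite invr_ge0. Qed.
Lemma half_le1 : half_rat <= 1. Proof. by rewrite invf_le1 // ler1n. Qed.

(* When the leading store x_(a+1) is not
   part of the stream, this is the number of coin flips a good configuration
   prescribes (each load must pass the stores issued since x_(a+1)). *)
Definition wait (h : nat -> bool) (L : nat) : nat :=
  (\sum_(0 <= i < L) (if h i then 0 else (ones h i).+1))%N.

(* A leading 0 costs one flip; a leading 1 adds one flip to every later 0. *)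
Lemma wait_bcons b h L :
  wait (bcons b h) L.+1 = (~~ b + wait h L + b * (L - ones h L))%N.
Proof.
have Hzeros : (L - ones h L = \sum_(0 <= i < L) (~~ h i : nat))%N.
  rewrite -(ones_sum (predC h)) /ones.
  by have := count_predC h (iota 0 L); rewrite size_iota; lia.
rewrite /wait big_nat_recl // Hzeros big_distrr -addnA -big_split /=.
congr addn; first by case: b.
by apply: eq_bigr => i _; rewrite ones_bcons; case: (h i); case: b => /=; lia.
Qed.

Definition wait_sum (k L : nat) : rat := \sum_(t : {ffun 'I_L -> bool})
  (if ones (storebit t) L == k then half_rat ^+ wait (storebit t) L else 0).
Definition nstrings (k L : nat) : rat := \sum_(t : {ffun 'I_L -> bool})
  (if ones (storebit t) L == k then 1 else 0).

Lemma sum_bits0 (F : {ffun 'I_0 -> bool} -> rat) c : (forall t, F t = c) -> \sum_t F t = c.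
Proof.
by move=> H; under eq_bigr => t _ do rewrite H; rewrite sumr_const card_ffun card_ord.
Qed.

Lemma wait_sum_nil k : wait_sum k 0 = (k == 0)%N%:R.
Proof.
by apply: sum_bits0 => t; rewrite /ones /= eq_sym; case: eqP => // _; rewrite /wait big_geq.
Qed.

Lemma nstrings_nil k : nstrings k 0 = (k == 0)%N%:R.
Proof. by apply: sum_bits0 => t; rewrite /ones /= eq_sym; case: eqP. Qed.

(* Splitting on the first bit gives Pascal-like recurrences. *)
Lemma wait_sumS k L :
  wait_sum k.+1 L.+1 = half_rat ^+ (L - k) * wait_sum k L + half_rat * wait_sum k.+1 L.
Proof.
rewrite /wait_sum (sum_bits_cons L (fun g => if ones g L.+1 == k.+1
   then half_rat ^+ wait g L.+1 else 0)) big_split /= !mulr_sumr; congr (_ + _).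
  apply: eq_bigr => t _; rewrite ones_bcons wait_bcons add1n eqSS.
  by case: eqP => [->|]; rewrite ?mulr0 // mul1n add0n exprD mulrC.
apply: eq_bigr => t _; rewrite ones_bcons wait_bcons add0n.
by case: eqP => _; rewrite ?mulr0 // mul0n addn0 add1n exprS.
Qed.

Lemma wait_sum0S L : wait_sum 0 L.+1 = half_rat * wait_sum 0 L.
Proof.
rewrite /wait_sum (sum_bits_cons L (fun g => if ones g L.+1 == 0%N
   then half_rat ^+ wait g L.+1 else 0)) big_split /= mulr_sumr.
rewrite big1 ?add0r //.
apply: eq_bigr => t _; rewrite ones_bcons wait_bcons add0n.
by case: eqP => _; rewrite ?mulr0 // mul0n addn0 add1n exprS.
Qed.

Lemma nstringsS k L : nstrings k.+1 L.+1 = nstrings k L + nstrings k.+1 L.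
Proof.
rewrite /nstrings (sum_bits_cons L (fun g => if ones g L.+1 == k.+1 then 1 else 0)).
by rewrite big_split /=; congr (_ + _); apply: eq_bigr => t _; rewrite ones_bcons.
Qed.

Lemma nstrings0S L : nstrings 0 L.+1 = nstrings 0 L.
Proof.
rewrite /nstrings (sum_bits_cons L (fun g => if ones g L.+1 == 0%N then 1 else 0)).
rewrite big_split /= big1 ?add0r //.
by apply: eq_bigr => t _; rewrite ones_bcons.
Qed.

Lemma nstringsE k L : nstrings k L = 'C(L, k)%:R.
Proof.
elim: L k => [|L IH] [|k]; [by rewrite nstrings_nil | by rewrite nstrings_nil | |].
  by rewrite nstrings0S IH !bin0.
by rewrite nstringsS !IH binS natrD addrC.
Qed.

Lemma wait_sum_gt L k : (L < k)%N -> wait_sum k L = 0.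
Proof.
elim: L k => [|L IH] [|k] //= Hk; first by rewrite wait_sum_nil.
by rewrite wait_sumS !IH ?mulr0 ?addr0 //; lia.
Qed.

Lemma wait_sum_diag k : wait_sum k k = 1.
Proof.
elim: k => [|k IH]; first by rewrite wait_sum_nil.
by rewrite wait_sumS IH subnn expr0 mulr1 wait_sum_gt // mulr0 addr0.
Qed.

Lemma wait_sum0 L : wait_sum 0 L = half_rat ^+ L.
Proof.
elim: L => [|L IH]; first by rewrite wait_sum_nil.
by rewrite wait_sum0S IH exprS.
Qed.

(* The key estimate wait_sum k (k+q) >= 2 half^q - half^((k+1) q), by induction
   on k and q through wait_sumS; the step reduces to
   half^((k+2) q + 1) <= half^(2 q + 1), i.e. to half^(k q) <= 1. *)
Lemma wait_sum_bound k q :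
  2%:R * half_rat ^+ q - half_rat ^+ (k.+1 * q) <= wait_sum k (k + q).
Proof.
elim: k q => [|k IHk] q.
  by rewrite wait_sum0 add0n mul1n mulr_natl mulr2n addrK.
elim: q => [|q IHq]; first by rewrite addn0 wait_sum_diag muln0 !expr0 mulr1; lra.
rewrite -addSnnS addSn wait_sumS (_ : k.+1 + q - k = q.+1)%N; last lia.
have := IHk q.+1; rewrite addnS -addSn => H1.
apply: le_trans (lerD (ler_wpM2l (exprn_ge0 _ half_ge0) H1)
                      (ler_wpM2l half_ge0 IHq)).
set A := half_rat ^+ q; set E := half_rat ^+ (k * q).
have EB : half_rat ^+ (k.+2 * q.+1) = half_rat * A * half_rat ^+ (k.+1 * q.+1).
  by rewrite -exprS -exprD; congr (_ ^+ _); lia.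
have EC : half_rat ^+ (k.+2 * q) = A * A * E by rewrite -!exprD; congr (_ ^+ _); lia.
have HE0 : 0 <= E by apply: exprn_ge0; exact: half_ge0.
have HE1 : E <= 1 by apply: exprn_ile1; [exact: half_ge0 | exact: half_le1].
rewrite EB EC exprS -/A; set B := half_rat ^+ (k.+1 * q.+1).
have HA0 : 0 <= A by apply: exprn_ge0; exact: half_ge0.
have HAA : 0 <= A * A * (1 - E) by rewrite !mulr_ge0 // subr_ge0.
rewrite /half_rat in HAA *; nra.
Qed.

Local Notation coins m := {ffun 'I_(m + 2) -> {ffun 'I_(m + 2) -> bool}}.

Lemma indicator_forall (I : finType) (P : pred I) :
  (if [forall i, P i] then 1 else 0 : rat) = \prod_i (if P i then 1 else 0).
Proof.
case: forallP => [H|H]; first by rewrite big1 // => i _; rewrite H.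
have [i /negbTE Hi] : exists i, ~~ P i.
  apply/existsP; apply: contraT; rewrite negb_exists => /forallP H'.
  by case: H => i; apply/negPn.
by rewrite (bigD1 i) //= Hi mul0r.
Qed.

Lemma prod_half_if (I : finType) (P : pred I) :
  \prod_i (if P i then half_rat else 1) = half_rat ^+ (\sum_i (P i : nat))%N.
Proof. by rewrite -prodrXr; apply: eq_bigr => i _; case: (P i). Qed.

Lemma sum_ord_lt n K : (K <= n)%N -> (\sum_(j < n) ((j < K)%N : nat))%N = K.
Proof.
suff Hmin k : (\sum_(j < k) ((j < K)%N : nat))%N = minn K k by rewrite Hmin; lia.
elim: k => [|k IH]; first by rewrite big_ord0; lia.
by rewrite big_ord_recr /= IH; case: ltnP; lia.
Qed.

Section GoodCoins.
Variables (m : nat) (t : {ffun 'I_m -> bool}) (a : nat).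

(* Round i+1 needs coin j to succeed: x_(i+1) is a load, a+1 < i+1 <= m, and
   j is smaller than the number of stores it must pass. *)
Definition needs (i j : 'I_(m + 2)) : bool :=
  [&& (a < i)%N, (i < m)%N, ~~ storebit t i & (j < nstores t a i)%N].

Definition good (c : coins m) : bool := [forall i, forall j, needs i j ==> c i j].

Definition nflips : nat := (\sum_(i < m + 2) \sum_(j < m + 2) (needs i j : nat))%N.

Lemma good_coinsP c : good c -> forall r, (a.+1 < r <= m)%N -> ~~ storebit t r.-1 ->
  forall i, (i < nstores t a r.-1)%N -> coin c r i.
Proof.
move=> /forallP Hc r Hr Hst i Hi.
have Hk := nstores_le t a r.-1.
rewrite /coin; case: insubP => [i0 _ Ei0|]; last by rewrite (_ : r.-1 < m + 2)%N //; lia.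
case: insubP => [j0 _ Ej0|]; last by rewrite (_ : i < m + 2)%N //; lia.
apply: (implyP (forallP (Hc i0) j0)).
by rewrite /needs Ei0 Ej0 Hst Hi andbT; apply/andP; split; lia.
Qed.

(* Each prescribed flip halves the number of coin configurations. *)
Lemma card_good : #|[set c | good c]|%:R = #|{: coins m}|%:R * half_rat ^+ nflips.
Proof.
have Hcard : #|{: coins m}|%:R = \prod_(i < m + 2) \prod_(j < m + 2) (2%:R : rat).
  by rewrite !card_ffun card_bool card_ord !prodr_const !card_ord !natrX.
rewrite Hcard -sum1_card natr_sum big_mkcond /=.
transitivity (\sum_(c : coins m)
   \prod_i \prod_j (if needs i j ==> c i j then (1 : rat) else 0)).
  apply: eq_bigr => c _; rewrite inE /good.
  by under [RHS]eq_bigr => i _ do rewrite -indicator_forall; rewrite -indicator_forall.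
rewrite -(bigA_distr_bigA (fun i (g : {ffun 'I_(m + 2) -> bool}) =>
   \prod_j (if needs i j ==> g j then (1 : rat) else 0))) /=.
under eq_bigr => i _ do rewrite -(bigA_distr_bigA (fun j (v : bool) =>
   (if needs i j ==> v then (1 : rat) else 0))) /=.
have E i j : \sum_(v : bool) (if needs i j ==> v then (1 : rat) else 0) =
    2%:R * (if needs i j then half_rat else 1).
  by rewrite big_bool /=; case: (needs i j); rewrite /= ?addr0 ?mulfV ?mulr1.
under eq_bigr => i _ do under eq_bigr => j _ do rewrite E.
under eq_bigr => i _ do rewrite big_split /= prod_half_if.
by rewrite big_split /= -prodrXr.
Qed.

Lemma nflips_wait : (a < m)%N -> storebit t a ->
  nflips = wait (fun j => storebit t (a.+1 + j)) (m - a.+1).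
Proof.
move=> Ham Hsta; rewrite /nflips.
pose f i := if [&& (a < i)%N, (i < m)%N & ~~ storebit t i] then nstores t a i else 0%N.
transitivity (\sum_(i < m + 2) f i)%N.
  apply: eq_bigr => i _; rewrite /f /needs.
  case: (a < i)%N; case: (i < m)%N; case: (storebit t i) => /=; try by rewrite big1.
  by apply: sum_ord_lt; have := nstores_le t a i; have := ltn_ord i; lia.
rewrite -(big_mkord xpredT f) (big_cat_nat _ (n := a.+1)) //=; last lia.
rewrite (big_cat_nat _ (n := m) (m := a.+1)) //=; try lia.
rewrite big1_seq; last first.
  by move=> i; rewrite mem_index_iota /f => Hi; case: ifP => // /and3P [? ? _]; lia.
rewrite add0n [X in (_ + X)%N]big1_seq ?addn0; last first.
  by move=> i; rewrite mem_index_iota /f => Hi; case: ifP => // /and3P [? ? _]; lia.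
rewrite -[a.+1]add0n big_addn /wait; apply: eq_big_nat => i /andP [_ Hi].
rewrite /f addnC (_ : (a < a.+1 + i)%N); last lia.
rewrite (_ : (a.+1 + i < m)%N) /=; last lia.
case: (storebit t (a.+1 + i)) => //=.
rewrite /nstores (_ : a.+1 + i - a = i.+1)%N /=; last lia.
rewrite Hsta add1n /ones; congr S.
by rewrite -[a.+1]addn0 iotaDl count_map; apply: eq_count => j /=; rewrite addn0.
Qed.

End GoodCoins.

Section Counting.
Variables (m mu q : nat).
Hypotheses (Hmq : (mu + q <= m)%N) (Hmu : (0 < mu)%N).

(* x_(a+1) is the candidate Phi_mu; the L = mu - 1 + q instructions after it
   hold mu - 1 stores and q loads. *)
Let a := (m - mu - q)%N.
Let L := (mu - 1 + q)%N.

Definition window (t : {ffun 'I_m -> bool}) : bool :=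
  storebit t a && (count (storebit t) (iota a (mu + q)) == mu).

Lemma Cond_windowE (w : Omega m) : Cond mu q w = window w.1.
Proof. by rewrite Cond_window Hmq. Qed.

(* Averaging over the conditioning event: the bits before x_(a+1) are free,
   and x_(a+2) .. x_m range over the strings of length L with mu-1 ones. *)
Lemma sum_window (G : (nat -> bool) -> rat) :
  \sum_(t : {ffun 'I_m -> bool})
     (if window t then G (fun j => storebit t (a.+1 + j)) else 0) =
  2%:R ^+ a * \sum_(t : {ffun 'I_L -> bool})
     (if ones (storebit t) L == (mu - 1)%N then G (storebit t) else 0).
Proof.
pose F (h : nat -> bool) : rat :=
  if h 0%N && (ones h L.+1 == mu) then G (fun j => h j.+1) else 0.
transitivity (\sum_(t : {ffun 'I_m -> bool}) F (fun j => storebit t (a + j))).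
  apply: eq_bigr => t _; rewrite /window /F addn0 /ones.
  rewrite (_ : L.+1 = mu + q)%N; last by rewrite /L; lia.
  rewrite -[X in iota X]addn0 iotaDl count_map.
  congr (if _ then G _ else 0); apply: functional_extensionality => j.
  by rewrite addnS addSn.
rewrite (sum_bits_suffix F (n := L.+1)); last by rewrite /a /L; lia.
rewrite sum_bits_cons; congr (_ * _); apply: eq_bigr => t _.
rewrite /F !ones_bcons /= addr0 add1n.
by rewrite (_ : (ones (storebit t) L).+1 == mu = (ones (storebit t) L == mu - 1)%N);
  last by apply/eqP/eqP; lia.
Qed.

Lemma card_Cond :
  #|[set w : Omega m | Cond mu q w]|%:R =
  2%:R ^+ a * 'C(L, mu - 1)%:R * #|{: coins m}|%:R :> rat.
Proof.
have -> : [set w : Omega m | Cond mu q w] = setX [set t | window t] setT.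
  by apply/setP => -[t c]; rewrite !inE Cond_windowE andbT.
rewrite cardsX cardsT natrM -nstringsE -sum1_card natr_sum big_mkcond /=.
congr (_ * _); rewrite -(sum_window (fun _ => 1)).
by apply: eq_bigr => t _; rewrite inE.
Qed.

Lemma card_window_good :
  #|[set w : Omega m | window w.1 && good w.1 a w.2]|%:R =
  2%:R ^+ a * wait_sum (mu - 1) L * #|{: coins m}|%:R :> rat.
Proof.
rewrite /wait_sum -(sum_window (fun h => half_rat ^+ wait h L)) mulr_suml.
transitivity (\sum_(t : {ffun 'I_m -> bool}) \sum_(c : coins m)
   (if window t && good t a c then 1 else 0 : rat)).
  rewrite -[X in X%:R = _]sum1_card natr_sum big_mkcond /=.
  transitivity (\sum_(w : Omega m)
    (fun t c => if window t && good t a c then 1 else 0 : rat) w.1 w.2).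
    by symmetry; apply: eq_bigr => -[t c] _; rewrite inE.
  by rewrite pair_bigA.
apply: eq_bigr => t _; case Hw: (window t); last first.
  by rewrite mul0r big1 // => c _; rewrite inE Hw.
have /andP [Hst _] := Hw.
have Ham : (a < m)%N by move: Hst; case: ltnP => // H; rewrite storebit_out.
rewrite (_ : L = m - a.+1)%N; last by rewrite /L /a; lia.
rewrite -nflips_wait // mulrC -card_good -sum1_card natr_sum [RHS]big_mkcond /=.
by apply: eq_bigr => c _; rewrite inE.
Qed.

(* Good coins force F_mu. *)
Lemma card_Fev_Cond : 2%:R ^+ a * wait_sum (mu - 1) L * #|{: coins m}|%:R <=
  #|[set w : Omega m | Fev TSO mu w && Cond mu q w]|%:R.
Proof.
rewrite -card_window_good ler_nat; apply/subset_leq_card/subsetP => -[t c].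
rewrite !inE Cond_windowE /= => /andP [Hw Hg].
rewrite Hw andbT; have /andP [_ /eqP Hcnt] := Hw.
apply: (Fev_of_good_coins (a := a)); rewrite /a; try lia.
- by rewrite /nstores (_ : m - (m - mu - q) = mu + q)%N //; lia.
- exact: good_coinsP Hg.
Qed.

End Counting.

Lemma bound_half mu q : (2%:R : rat) ^ (- (q%:Z - 1)) - 2%:R ^ (- (mu * q)%N%:Z) =
  2%:R * half_rat ^+ q - half_rat ^+ (mu * q).
Proof.
rewrite (_ : - (q%:Z - 1) = 1 + - q%:Z); last by ring.
by rewrite exprzDr ?unitfE // expr1z -!exprz_inv -!exprnP.
Qed.

Unset Implicit Arguments.

Theorem claim2 (m : nat) (hm : (1 <= m)%N) (mu q : nat) (hmu : (1 <= mu)%N)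
  (hC : (0 < #|[set w : Omega m | Cond mu q w]|)%N) :
  ((2%:R : rat) ^ (- (q%:Z - 1)) - (2%:R : rat) ^ (- (mu * q)%N%:Z))
    / ('C(mu + q - 1, q))%:R
  <= prob_cond (Fev TSO (m:=m) mu) (Cond (m:=m) mu q).
Proof.
have Hmq : (mu + q <= m)%N.
  by move: hC => /card_gt0P [w]; rewrite inE Cond_window => /and3P [].
have Hcoins : 0 < #|{: {ffun 'I_(m + 2) -> {ffun 'I_(m + 2) -> bool}}}|%:R :> rat.
  by rewrite ltr0n; apply/card_gt0P; exists [ffun=> [ffun=> false]].
have Hbin : 0 < 'C(mu - 1 + q, mu - 1)%:R :> rat by rewrite ltr0n bin_gt0; lia.
have H2a : 0 < 2%:R ^+ (m - mu - q) :> rat by rewrite exprn_gt0.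
rewrite /prob_cond card_Cond // bound_half.
rewrite (_ : 'C(mu + q - 1, q) = 'C(mu - 1 + q, mu - 1)); last first.
  by rewrite -bin_sub; [congr 'C(_, _)|]; lia.
apply: (@le_trans _ _ (wait_sum (mu - 1) (mu - 1 + q) / 'C(mu - 1 + q, mu - 1)%:R)).
  rewrite ler_pM2r ?invr_gt0 //.
  by have := wait_sum_bound (mu - 1) q; rewrite (_ : (mu - 1).+1 = mu) //; lia.
rewrite ler_pdivlMr ?mulr_gt0 //; apply: le_trans (card_Fev_Cond Hmq hmu).
by rewrite le_eqVlt; apply/predU1P; left; field; rewrite gt_eqF.
Qed.
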